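(* Let $k\ge 2$ and $\alpha_i=\frac{1}{k-1}$ for all $1\le i\le k$. For an integer $g\ge0$ let $\ell$ be the least nonnegative residue of $g$ modulo $k-1$. Then the number $f(g)$ of $\alpha$-communal $k$-tuples with entries summing to $g$ is \[ f(g)=\binom{\frac{g-\ell k}{k-1}+k-1}{k-1}, \] and \[ \sum_{g\ge 0}f(g)x^g=\frac{1-x^{k(k-1)}}{(1-x^k)(1-x^{k-1})^k}. \]
   Context: A $k$-tuple $[g_1,\dots,g_k]$ of integers is $\alpha$-communal if $0\le g_i\le \alpha_i\sum_{j=1}^k g_j$ for every $i$. Binomial coefficients $\binom{n}{r}$ are $0$ for $0\le n<r$. *)

From HB Require Import structures.
From mathcomp Require Import all_boot all_order all_algebra.
Set Implicit Arguments. Unset Strict Implicit. Unset Printing Implicit Defensive.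
Import Order.TTheory GRing.Theory Num.Theory.

Local Open Scope ring_scope.

Definition communal (k : nat) (alpha : 'I_k -> rat) (t : 'I_k -> int) : bool :=
  [forall i : 'I_k, (0 <= t i) && ((t i)%:~R <= alpha i * (\sum_(j < k) t j)%:~R)].

(* Since entries are nonnegative and sum to g, each entry lies in [0, g],
   so such tuples are exactly the functions 'I_k -> 'I_(g.+1) below. *)
Definition ncommunal (k : nat) (alpha : 'I_k -> rat) (g : nat) : nat :=
  #|[set t : {ffun 'I_k -> 'I_g.+1} |
      communal alpha (fun i => (t i)%:Z) &&
      (\sum_(i < k) (t i : nat) == g)%N]|.

(* Write k = m + 1 with m >= 1 and g = q m + r with r < m.  For a tuple of
   naturals with sum g, the condition t_i <= g/m is t_i <= q, so f(g) counts
   (m+1)-tuples capped by q with sum g.  The complement u_i = q - t_i maps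
   them bijectively onto the (m+1)-tuples with sum (m+1) q - g = q - r, of
   which there are C(q - r + m, m) by stars and bars (none if q < r).

   For the generating function, this closed form says that f(g) counts the
   decompositions g = l (m+1) + m t with l < m, weighted by C(t + m, m): such
   a decomposition is unique, with l = r and t = q - r.  Hence f agrees up to
   degree n with S G, where S = sum_(l<m) x^(l(m+1)) and G is the truncated
   expansion of 1/(1 - x^m)^(m+1).  Finally (1 - x^(m+1)) S = 1 - x^(m(m+1))
   and (1 - x^m)^(m+1) G = 1 up to terms of degree > n, which gives the
   stated identity of power series, coefficient by coefficient. *)

From HB Require Import structures.
From mathcomp Require Import all_boot all_order all_algebra.
From mathcomp Require Import zify ring.
Import Order.TTheory GRing.Theory Num.Theory.

Section ClosedForm.
Local Open Scope nat_scope.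

Lemma card_in_bij (aT rT : finType) (A : {set aT}) (B : {set rT})
    (f : aT -> rT) (g : rT -> aT) :
  {in A, forall x, f x \in B} -> {in B, forall y, g y \in A} ->
  {in A, cancel f g} -> {in B, cancel g f} -> #|A| = #|B|.
Proof.
move=> fAB gBA fK gK; rewrite -(card_in_imset (f := f)); last first.
  by move=> x1 x2 x1A x2A e; rewrite -(fK x1) // e fK.
apply: eq_card => y; apply/imsetP/idP => [[x xA ->] | yB].
  exact: fAB.
by exists (g y); rewrite ?gK ?gBA.
Qed.

(* Stars and bars with a cap: the n.+1-tuples of naturals bounded by q and
   summing to g correspond, through t_i |-> q - t_i, to the n.+1-tuples
   summing to s = n.+1 * q - g; the hypothesis n * q <= g says s <= q. *)
Lemma card_capped_compositions n q g : n * q <= g <= n.+1 * q ->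
  #|[set t : {ffun 'I_n.+1 -> 'I_g.+1} |
      [forall i, t i <= q] && (\sum_i t i == g)]|
  = 'C(n.+1 * q - g + n, n).
Proof.
move=> /andP[ge_g le_g]; set s := n.+1 * q - g.
have le_sq : s <= q by rewrite /s mulSn; lia.
have sum_compl (u : 'I_n.+1 -> nat) : (forall i, u i <= q) ->
    \sum_i (q - u i) = n.+1 * q - \sum_i u i.
  by move=> le_uq; rewrite sumnB // sum_nat_const card_ord.
rewrite addnC -card_ord_partitions.
set A := [set t | _ && _]; set B := [set t | _ == s].
pose compl (t : {ffun 'I_n.+1 -> 'I_g.+1}) : n.+1.-tuple 'I_s.+1 :=
  [tuple inord (q - t i) | i < n.+1].
pose uncompl (u : n.+1.-tuple 'I_s.+1) : {ffun 'I_n.+1 -> 'I_g.+1} :=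
  [ffun i => inord (q - tnth u i)].
have summand_le (u : 'I_n.+1 -> nat) i : u i <= \sum_j u j.
  by rewrite (bigD1 i) //= leq_addr.
have compl_val t : t \in A -> forall i, tnth (compl t) i = q - t i :> nat.
  rewrite inE => /andP[/forallP le_tq /eqP sum_t] i.
  rewrite tnth_mktuple inordK // ltnS.
  apply: leq_trans (summand_le (fun j => q - t j) i) _.
  by rewrite sum_compl // sum_t.
have compl_in t : t \in A -> compl t \in B.
  move=> tA; rewrite inE big_tuple.
  under eq_bigr do rewrite compl_val //.
  move: tA; rewrite inE => /andP[/forallP le_tq /eqP sum_t].
  by rewrite sum_compl // sum_t.
have uncompl_sum u : u \in B ->
    (forall i, tnth u i <= q) /\ \sum_i (q - tnth u i) = g.
  rewrite inE big_tuple => /eqP sum_u.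
  have le_uq i : tnth u i <= q.
    apply: leq_trans (summand_le (fun j => tnth u j : nat) i) _.
    by rewrite sum_u.
  by split=> //; rewrite sum_compl // sum_u /s; lia.
have uncompl_val u : u \in B -> forall i, uncompl u i = q - tnth u i :> nat.
  move=> /uncompl_sum[_ sum_v] i; rewrite ffunE inordK // ltnS -sum_v.
  exact: (summand_le (fun j => q - tnth u j)).
have uncompl_in u : u \in B -> uncompl u \in A.
  move=> uB; rewrite inE; apply/andP; split.
    by apply/forallP => i; rewrite uncompl_val ?leq_subr.
  under eq_bigr do rewrite uncompl_val //.
  by rewrite (proj2 (uncompl_sum u uB)).
apply: (@card_in_bij _ _ _ _ compl uncompl) => // [t tA | u uB].
  apply/ffunP => i; apply: val_inj.
  rewrite /= uncompl_val ?compl_in // compl_val // subKn //.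
  by move: tA; rewrite inE => /andP[/forallP].
apply: eq_from_tnth => i; apply: val_inj.
rewrite /= compl_val ?uncompl_in // uncompl_val // subKn //.
exact: (proj1 (uncompl_sum u uB)).
Qed.

Lemma communal_uniformE m (t : 'I_m.+1 -> nat) : 0 < m ->
  communal (fun _ => (m%:R : rat)^-1)%R (fun i => Posz (t i))
  = [forall i, t i * m <= \sum_j t j].
Proof.
move=> m_gt0; apply: eq_forallb => i.
have -> : (\sum_(j < m.+1) Posz (t j))%R = Posz (\sum_(j < m.+1) t j).
  by rewrite -natz natr_sum; apply: eq_bigr => j _; rewrite natz.
by rewrite /= -!pmulrn ler_pdivlMl ?ltr0n // -natrM ler_nat mulnC.
Qed.

(* Closed form for f(g) when k = m + 1: with g = q * m + r, the tuples are
   those capped by q with sum g; there are C(q - r + m, m) of them when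
   r <= q and none otherwise (then q + m - r < m). *)
Lemma ncommunal_uniform m g : 0 < m ->
  ncommunal (fun _ : 'I_m.+1 => (m%:R : rat)^-1)%R g
  = 'C(g %/ m + m - g %% m, m).
Proof.
move=> m_gt0; set q := g %/ m; set r := g %% m.
have g_qr : g = q * m + r := divn_eq g m.
have lt_rm : r < m by rewrite ltn_mod.
have -> : ncommunal (fun _ : 'I_m.+1 => (m%:R : rat)^-1)%R g
    = #|[set t : {ffun 'I_m.+1 -> 'I_g.+1} |
          [forall i, t i <= q] && (\sum_i t i == g)]|.
  apply: eq_card => t; rewrite !inE communal_uniformE //.
  case: eqP => [-> | _]; rewrite ?andbF ?andbT //.
  by apply: eq_forallb => i; rewrite leq_divRL.
case: (leqP r q) => [le_rq | lt_qr].
  rewrite card_capped_compositions; last first.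
    by rewrite g_qr; apply/andP; split; lia.
  by congr 'C(_, _); rewrite g_qr; lia.
rewrite bin_small; last by lia.
apply/eqP; rewrite cards_eq0; apply/eqP/setP => t; rewrite !inE.
apply/negbTE/andP => -[/forallP le_tq /eqP sum_t].
have : \sum_i (t i : nat) <= \sum_(i < m.+1) q by apply: leq_sum => i _.
by rewrite sum_t sum_nat_const card_ord g_qr; lia.
Qed.

End ClosedForm.

Section Decompositions.
Local Open Scope nat_scope.

Lemma decomp_eq m l t g : l < m ->
  (g == l * m.+1 + m * t) = (l == g %% m) && (l + t == g %/ m).
Proof.
move=> lt_lm; have -> : l * m.+1 + m * t = (l + t) * m + l by ring.
apply/eqP/andP => [-> | [/eqP-> /eqP->]]; last exact: divn_eq.
rewrite modnMDl divnMDl ?(leq_ltn_trans _ lt_lm) //.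
by rewrite modn_small // divn_small // addn0 !eqxx.
Qed.

Lemma sum_pick N a (F : nat -> nat) : a < N ->
  \sum_(t < N) (t == a :> nat) * F t = F a.
Proof.
move=> lt_aN; transitivity (\sum_(t < N | t == a :> nat) F t).
  rewrite [RHS]big_mkcond; apply: eq_bigr => t _.
  by case: (_ == _); rewrite ?mul1n.
by rewrite (big_ord1_eq addn) lt_aN.
Qed.

Lemma sum_decomp m n g : 0 < m -> g <= n ->
  \sum_(l < m) \sum_(t < n.+1) (g == l * m.+1 + m * t) * 'C(t + m, m)
  = 'C(g %/ m + m - g %% m, m).
Proof.
move=> m_gt0 le_gn; set q := g %/ m; set r := g %% m.
have lt_rm : r < m by rewrite ltn_mod.
have lt_qn : q < n.+1 by rewrite ltnS (leq_trans (leq_div _ _)).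
have inner (l : 'I_m) :
    \sum_(t < n.+1) (g == l * m.+1 + m * t) * 'C(t + m, m)
    = (l == r :> nat) * ((r <= q) * 'C(q - r + m, m)).
  under eq_bigr => t _ do rewrite decomp_eq //.
  case: (l =P r :> nat) => [-> | _]; last by rewrite big1.
  case: (leqP r q) => [le_rq | lt_qr]; last first.
    by rewrite big1 // => t _; rewrite /= -/q; case: eqP => // r_t_q; lia.
  have lt_qr_n : q - r < n.+1 := leq_ltn_trans (leq_subr r q) lt_qn.
  rewrite /= !mul1n -/q -(@sum_pick _ _ (fun t => 'C(t + m, m)) lt_qr_n).
  by apply: eq_bigr => t _; rewrite -{1}(subnKC le_rq) eqn_add2l.
under eq_bigr do rewrite inner.
rewrite (@sum_pick _ _ (fun _ => (r <= q) * 'C(q - r + m, m)) lt_rm).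
case: (leqP r q) => [le_rq | lt_qr]; first by rewrite mul1n addnBAC.
by rewrite mul0n bin_small //; lia.
Qed.

End Decompositions.

Section Series.
Local Open Scope ring_scope.
Context {R : comNzRingType}.
Implicit Type y : R.

Lemma geometric_sum y n : (1 - y) * \sum_(i < n) y ^+ i = 1 - y ^+ n.
Proof. by rewrite -[RHS]opprB subrX1 -mulNr opprB. Qed.

Lemma binomial_series_step y m N :
  (1 - y) * \sum_(j < N.+1) ('C(j + m.+1, m.+1))%:R * y ^+ j
  = \sum_(j < N.+1) ('C(j + m, m))%:R * y ^+ j
    - ('C(N + m.+1, m.+1))%:R * y ^+ N.+1.
Proof.
elim: N => [|N IH].
  by rewrite !big_ord_recr !big_ord0 /= !add0n !binn; ring.
rewrite big_ord_recr mulrDr IH [in RHS]big_ord_recr /=.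
by rewrite !addSn !addnS binS !natrD !exprS; ring.
Qed.

(* The partial sums invert (1 - y)^(m+1) up to terms divisible by y^(N+1):
   this is 1 / (1 - y)^(m+1) = sum_j C(j + m, m) y^j, truncated. *)
Lemma binomial_series_inverse y m N : exists r : R,
  (1 - y) ^+ m.+1 * \sum_(j < N.+1) ('C(j + m, m))%:R * y ^+ j
  = 1 + y ^+ N.+1 * r.
Proof.
elim: m => [|m [r IH]].
  exists (-1); under eq_bigr do rewrite addn0 bin0 mul1r.
  by rewrite expr1 geometric_sum; ring.
exists (r - (1 - y) ^+ m.+1 * ('C(N + m.+1, m.+1))%:R).
by rewrite exprSr -mulrA binomial_series_step mulrBr IH; ring.
Qed.

End Series.

Section GeneratingFunction.
Local Open Scope ring_scope.

Definition residue_poly (m : nat) : {poly int} := \sum_(l < m) 'X^(l * m.+1).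

(* G(x) = sum_(t <= n) C(t + m, m) x^(m t), the truncated expansion of
   1 / (1 - x^m)^(m+1). *)
Definition binomial_poly (m n : nat) : {poly int} :=
  \sum_(t < n.+1) ('C(t + m, m))%:R * ('X^m) ^+ t.

Lemma residue_polyM m : (1 - 'X^(m.+1)) * residue_poly m = 1 - 'X^(m.+1 * m)%N.
Proof.
rewrite exprM -(geometric_sum _ m); congr (_ * _).
by apply: eq_bigr => l _; rewrite -exprM mulnC.
Qed.

Lemma coef_communal_series m n g : (0 < m)%N -> (g <= n)%N ->
  (residue_poly m * binomial_poly m n)`_g
  = (ncommunal (fun _ : 'I_m.+1 => (m%:R : rat)^-1) g)%:Z.
Proof.
move=> m_gt0 le_gn.
rewrite ncommunal_uniform // -(sum_decomp m n g m_gt0 le_gn).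
rewrite -natz natr_sum mulr_suml coef_sum; apply: eq_bigr => l _.
rewrite natr_sum mulr_sumr coef_sum; apply: eq_bigr => t _.
by rewrite -exprM mulrCA -exprD mulr_natl coefMn coefXn natrM mulr_natr.
Qed.

End GeneratingFunction.

Local Open Scope ring_scope.

Theorem mainTheorem10 (k : nat) (hk : (2 <= k)%N) :
  let alpha := fun _ : 'I_k => ((k - 1)%N%:R : rat)^-1 in
  (forall g : nat,
     let l := (g %% (k - 1))%N in
     ncommunal alpha g = 'C((g - l) %/ (k - 1) + (k - 1) - l, k - 1)) /\
  (forall n : nat,
     \sum_(i < n.+1)
        (((1 - 'X^k) * (1 - 'X^(k - 1)) ^+ k : {poly int})`_i
           * (ncommunal alpha (n - i))%:Z)
     = (1 - 'X^(k * (k - 1)) : {poly int})`_n).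
Proof.
case: k hk => // m; rewrite ltnS subn1 /= => m_gt0.
split=> [g | n].
  have -> : ((g - g %% m) %/ m = g %/ m)%N.
    by rewrite {1}(divn_eq g m) addnK mulnK.
  exact: ncommunal_uniform.
under eq_bigr => i _ do
  rewrite -(coef_communal_series m n _ m_gt0 (leq_subr i n)).
have [rest binomialK] := binomial_series_inverse ('X^m : {poly int}) m n.
rewrite -coefM mulrACA residue_polyM binomialK mulrDr mulr1 coefD.
rewrite -exprM mulrCA coefXnM ifT ?addr0 //.
by rewrite (leq_trans (ltnSn n)) // leq_pmull.
Qed.
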